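(* Let $X\in\mathfrak U$ and let $Y$ be a nonempty subspace of $X$. Then $Y\in\mathfrak U$.
   Context: For a metric space $(X,d)$, $\operatorname{Sp}(X)=\{d(x,y): x,y\in X,\ x\neq y\}$. $\mathfrak U$ denotes the class of finite ultrametric spaces $X$ with $|\operatorname{Sp}(X)|=|X|-1$. A subspace carries the restricted metric. *)

From HB Require Import structures.
From mathcomp Require Import all_boot all_order all_algebra.
Set Implicit Arguments. Unset Strict Implicit. Unset Printing Implicit Defensive.
Import Order.TTheory GRing.Theory Num.Theory.
Local Open Scope ring_scope.

Definition is_metric (R : realFieldType) (T : finType) (d : T -> T -> R) : Prop :=
  [/\ forall x y, 0 <= d x y,
      forall x y, d x y = 0 <-> x = y &
      forall x y, d x y = d y x] /\
  (forall x y z, d x z <= d x y + d y z).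

Definition is_ultrametric (R : realFieldType) (T : finType) (d : T -> T -> R) : Prop :=
  is_metric d /\ (forall x y z, d x z <= Num.max (d x y) (d y z)).

Definition Sp (R : realFieldType) (T : finType) (d : T -> T -> R) : seq R :=
  undup [seq d p.1 p.2 | p <- enum [pred p : T * T | p.1 != p.2]].

(* The class U: finite ultrametric spaces with |Sp(X)| = |X| - 1
   (computed in int, so the empty space is not in U). *)
Definition in_U (R : realFieldType) (T : finType) (d : T -> T -> R) : Prop :=
  is_ultrametric d /\ (size (Sp d))%:Z = (#|T|%:Z - 1)%R.

Definition restr (R : realFieldType) (T : finType) (d : T -> T -> R) (A : {set T})
  : {x : T | x \in A} -> {x : T | x \in A} -> R :=
  fun x y => d (val x) (val y).
Arguments restr {R T} d A _ _.

From mathcomp Require Import all_boot all_order all_algebra.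
From mathcomp Require Import zify.
Import Order.TTheory GRing.Theory Num.Theory.
Set Implicit Arguments. Unset Strict Implicit. Unset Printing Implicit Defensive.
Local Open Scope ring_scope.

(* Adding a point x to a nonempty set B of an ultrametric space adds at most
   one new distance: if y is a point of B nearest to x, then every d(x, c) with
   c in B is either d(x, y) or, by the isosceles property, equals d(y, c).
   Growing Y one point at a time up to the whole space X therefore gives
   |Sp(X)| - |Sp(Y)| <= |X| - |Y|, and the same bound started from a single
   point of Y gives |Sp(Y)| <= |Y| - 1.  With |Sp(X)| = |X| - 1 both
   inequalities are equalities. *)

Definition Sp_in (R : realFieldType) (T : finType) (d : T -> T -> R) (A : {set T})
    : seq R :=
  undup [seq d p.1 p.2 |
         p <- enum [pred p : T * T | [&& p.1 \in A, p.2 \in A & p.1 != p.2]]].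

Section SpectrumOfSubsets.

Variables (R : realFieldType) (T : finType) (d : T -> T -> R).

Lemma Sp_inP (A : {set T}) v :
  reflect (exists a b, [/\ a \in A, b \in A, a != b & v = d a b]) (v \in Sp_in d A).
Proof.
rewrite mem_undup; apply: (iffP mapP).
  by move=> [[a b]]; rewrite mem_enum => /and3P[Ha Hb Hab] ->; exists a, b.
move=> [a [b [Ha Hb Hab ->]]]; exists (a, b) => //.
by rewrite mem_enum inE /= Ha Hb Hab.
Qed.

Lemma Sp_in_setT : Sp_in d [set: T] = Sp d.
Proof.
by rewrite /Sp_in /Sp; congr (undup (map _ _)); apply: eq_enum => p; rewrite !inE.
Qed.

Lemma Sp_in_set1 a : Sp_in d [set a] = [::].
Proof.
case E: (Sp_in d [set a]) => [|v s] //.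
have : v \in Sp_in d [set a] by rewrite E mem_head.
by case/Sp_inP=> x [y [/set1P -> /set1P -> /eqP]].
Qed.

Lemma size_Sp_restr (A : {set T}) : size (Sp (restr d A)) = size (Sp_in d A).
Proof.
apply/perm_size/uniq_perm; rewrite ?undup_uniq // => v.
apply/idP/Sp_inP; rewrite mem_undup.
  move=> /mapP[[a b]]; rewrite mem_enum /= => ab ->.
  by exists (val a), (val b); split; rewrite ?(valP a) ?(valP b) ?val_eqE.
move=> [a [b [Ha Hb ab ->]]]; apply/mapP.
exists (exist _ a Ha, exist _ b Hb) => //.
by rewrite mem_enum inE -val_eqE.
Qed.

End SpectrumOfSubsets.

Lemma is_ultrametric_comp (R : realFieldType) (S T : finType) (d : T -> T -> R)
    (f : S -> T) :
  injective f -> is_ultrametric d -> is_ultrametric (fun x y => d (f x) (f y)).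
Proof.
move=> f_inj [[[d_ge0 d_eq0 dC] d_tri] d_ultra].
split; [split; [split|] |] => // x y.
by rewrite d_eq0; split=> [/f_inj|->].
Qed.

Section UltrametricSpectrum.

Variables (R : realFieldType) (T : finType) (d : T -> T -> R).
Hypothesis d_ultra : is_ultrametric d.

Lemma ultra_isosceles x y z : d x y < d x z -> d x z = d y z.
Proof.
have [[[_ _ dC] _] d_max] := d_ultra.
move=> lt_xy_xz; apply/eqP; rewrite eq_le; apply/andP; split.
  have := d_max x y z; rewrite le_max leNgt lt_xy_xz /=; exact.
have := d_max y x z; rewrite le_max (dC y x) => /orP[le|//].
exact: le_trans le (ltW lt_xy_xz).
Qed.

Lemma size_Sp_in_setU1 (B : {set T}) x :
  B != set0 -> (size (Sp_in d (x |: B)) <= (size (Sp_in d B)).+1)%N.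
Proof.
have [[[_ _ dC] _] _] := d_ultra.
case/set0Pn=> y1 y1B.
case: (arg_minP (d x) y1B) => y yB y_min.
have dx_in c : c \in B -> d x c = d x y \/ d x c \in Sp_in d B.
  move=> cB; have := y_min c cB; rewrite le_eqVlt => /orP[/eqP <-|lt]; first by left.
  right; apply/Sp_inP; exists y, c; rewrite (ultra_isosceles lt); split=> //.
  by apply: contraTneq lt => ->; rewrite ltxx.
apply: (@uniq_leq_size _ _ (d x y :: Sp_in d B)); first exact: undup_uniq.
move=> v /Sp_inP[a [b [/setU1P Ha /setU1P Hb ab ->]]]; rewrite in_cons.
move: ab; case: Ha Hb => [-> | aB] [-> | bB] ab.
- by rewrite eqxx in ab.
- by case: (dx_in b bB) => [->|->]; rewrite ?eqxx ?orbT.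
- by rewrite dC; case: (dx_in a aB) => [->|->]; rewrite ?eqxx ?orbT.
- by apply/orP; right; apply/Sp_inP; exists a, b.
Qed.

Lemma size_Sp_in_subset (A B : {set T}) :
  A != set0 -> A \subset B ->
  (size (Sp_in d B) + #|A| <= size (Sp_in d A) + #|B|)%N.
Proof.
move=> A0; have [n] := ubnP #|B|; elim: n B => // n IH B /ltnSE leBn AB.
have [-> // | neqAB] := eqVneq A B.
have /set0Pn[x /setDP[xB xA]] : B :\: A != set0.
  by rewrite setD_eq0; apply: contra neqAB => BA; rewrite eqEsubset AB.
have AB' : A \subset B :\ x.
  by apply/subsetP=> z zA; rewrite in_setD1 (subsetP AB) // andbT; apply: contraNneq xA => <-.
have B'0 : B :\ x != set0 by apply: contraNneq A0 => B'0; rewrite -subset0 -B'0.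
have cardB : #|B| = #|B :\ x|.+1 by rewrite (cardsD1 x B) xB.
have := IH (B :\ x) ltac:(by rewrite -ltnS -cardB) AB'.
have := size_Sp_in_setU1 x B'0; rewrite setD1K // cardB.
lia.
Qed.

Lemma size_Sp_in_lt (A : {set T}) : A != set0 -> (size (Sp_in d A) < #|A|)%N.
Proof.
move=> /set0Pn[a aA].
have a0 : [set a] != set0 by apply/set0Pn; exists a; rewrite set11.
have := @size_Sp_in_subset [set a] A a0; rewrite sub1set Sp_in_set1 cards1.
by move=> /(_ aA); rewrite addn1.
Qed.

End UltrametricSpectrum.

Theorem corollary9 (R : realFieldType) (T : finType) (d : T -> T -> R) (A : {set T}) :
  in_U d -> A != set0 -> in_U (restr d A).
Proof.
move=> [d_ultra size_Sp] A0; split; first exact: is_ultrametric_comp val_inj d_ultra.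
rewrite size_Sp_restr card_sig.
have := size_Sp_in_subset d_ultra A0 (subsetT A); rewrite Sp_in_setT cardsT.
have := size_Sp_in_lt d_ultra A0.
have -> : #|[pred x | x \in A]| = #|A| by [].
lia.
Qed.
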